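(* Let $0<x\le 1$ and $y\ge1$. Then for every $0<a<1$, $$\Gamma(x,y)\ \ge\ \frac{a}{1+a(y-1)}\Big(\frac{a}{e}\Big)^{x-1}\Big(\frac{1-x}{1-a}\Big)^{x-1}.$$ In particular, for all $0<x\le1$ and all $0<a<1$, $$\Gamma(x)\ \ge\ a^{x}e^{1-x}\Big(\frac{1-x}{1-a}\Big)^{x-1}.$$ (When $x=1$ the factor $\big(\frac{1-x}{1-a}\big)^{x-1}$ is interpreted as $0^0=1$.)
   Context: For $x>0,y>0$ the Bigamma function is the (convergent) improper integral $\Gamma(x,y):=\int_0^1(-\ln t)^{x-1}\big(-\ln(1-t)\big)^{y-1}\,dt$. $\Gamma(x)$ denotes Euler's gamma function; note $\Gamma(x,1)=\Gamma(x)$. *)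

From HB Require Import structures.
From mathcomp Require Import all_boot all_order all_algebra.
From mathcomp Require Import all_classical all_reals all_analysis.
Set Implicit Arguments. Unset Strict Implicit. Unset Printing Implicit Defensive.
Import Order.TTheory GRing.Theory Num.Theory.
Local Open Scope classical_set_scope.
Local Open Scope ring_scope.

Definition Bigamma (R : realType) (x y : R) : \bar R :=
  (\int[@lebesgue_measure R]_(t in `]0%R, 1%R[)
     ((- ln t) `^ (x - 1) * (- ln (1 - t)) `^ (y - 1))%:E)%E.

Definition EulerGamma (R : realType) (x : R) : \bar R :=
  (\int[@lebesgue_measure R]_(t in `]0%R, +oo[) (t `^ (x - 1) * expR (- t))%:E)%E.

From HB Require Import structures.
From mathcomp Require Import ring lra.
From mathcomp Require Import all_boot all_order all_algebra.
From mathcomp Require Import all_classical all_reals all_analysis measurable_realfun.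
Import Order.TTheory GRing.Theory Num.Theory.
Import numFieldNormedType.Exports.
Local Open Scope ring_scope.

(* With p := x - 1 <= 0 and c := (1 - a)/a, the function u |-> u^p e^(c u) is
   minimal on ]0, +oo[ at u = -p/c, with minimum K := ((1 - x) a/((1 - a) e))^p,
   the constant of the theorem.  At u = -ln t this gives (-ln t)^p >= K t^c on
   ]0,1[; together with -ln(1 - t) >= t it yields
   Bigamma(x,y) >= K \int_0^1 t^(c + y - 1) dt = K/(c + y).  At u = t it gives
   t^p e^(-t) >= K e^(-t/a), whence Gamma(x) >= K \int_0^oo e^(-t/a) dt = K a. *)

Section GammaLowerBound.
Variable R : realType.
Notation mu := (@lebesgue_measure R).

Lemma gt0_powRE (b r : R) : 0 < b -> b `^ r = expR (r * ln b).
Proof. by move=> b0; rewrite /powR gt_eqF. Qed.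

Lemma ln_le_subr1 (w : R) : 0 < w -> ln w <= w - 1.
Proof. by move=> w0; have := @le_ln1Dx R (w - 1); rewrite addrCA subrr addr0; apply; lra. Qed.

Lemma powR_expR_ge (p c u : R) : p <= 0 -> 0 < c -> 0 < u ->
  (- p / (c * expR 1)) `^ p <= u `^ p * expR (c * u).
Proof.
rewrite le_eqVlt => /predU1P[->|p_lt0] c0 u0.
  by rewrite !powRr0 mul1r -expR0 ler_expR mulr_ge0 ?ltW.
have Np0 : 0 < - p by rewrite oppr_gt0.
have ce0 : 0 < c * expR 1 by rewrite mulr_gt0 ?expR_gt0.
rewrite !gt0_powRE ?divr_gt0// -expRD ler_expR.
rewrite ln_div ?posrE// lnM ?posrE ?expR_gt0// expRK.
(* the tangent-line bound ln w <= w - 1 at w := c u / (-p) *)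
have w0 : 0 < c * u / - p by rewrite divr_gt0 ?mulr_gt0.
have := @ln_le_subr1 _ w0; rewrite ln_div ?posrE ?mulr_gt0// lnM ?posrE//.
have wp : c * u / - p * - p = c * u by rewrite divfK ?gt_eqF.
nra.
Qed.

Definition gamma_lb_coef (x a : R) :=
  (a / expR 1) `^ (x - 1) * ((1 - x) / (1 - a)) `^ (x - 1).

Lemma gamma_lb_coef_ge0 (x a : R) : 0 <= gamma_lb_coef x a.
Proof. by rewrite mulr_ge0 ?powR_ge0. Qed.

Lemma gamma_lb_coef_le (x a u : R) : x <= 1 -> 0 < a < 1 -> 0 < u ->
  gamma_lb_coef x a <= u `^ (x - 1) * expR ((1 - a) / a * u).
Proof.
move=> x_le1 /andP[a0 a1] u0.
have c0 : 0 < (1 - a) / a by rewrite divr_gt0 ?subr_gt0.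
suff -> : gamma_lb_coef x a = (- (x - 1) / ((1 - a) / a * expR 1)) `^ (x - 1).
  by apply: powR_expR_ge; rewrite ?subr_le0.
rewrite /gamma_lb_coef -powRM ?divr_ge0 ?subr_ge0 ?expR_ge0 ?(ltW a0) ?(ltW a1)//.
by congr powR; field; rewrite ?subr_eq0 ?gt_eqF ?expR_gt0// eq_sym lt_eqF.
Qed.

Lemma bigamma_integrand_ge (x y a t : R) : x <= 1 -> 1 <= y -> 0 < a < 1 ->
  0 < t < 1 ->
  gamma_lb_coef x a * t `^ ((1 - a) / a + (y - 1))
    <= (- ln t) `^ (x - 1) * (- ln (1 - t)) `^ (y - 1).
Proof.
move=> x_le1 y_ge1 a01 /andP[t0 t1].
have lnt0 : 0 < - ln t by rewrite oppr_gt0 ln_lt0// t0.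
rewrite [t `^ _]powRD ?mulrA; last by apply/implyP => _; rewrite gt_eqF.
apply: ler_pM; rewrite ?mulr_ge0 ?powR_ge0 ?gamma_lb_coef_ge0//.
- rewrite [t `^ _]gt0_powRE// -ler_pdivlMr ?expR_gt0// -expRN -mulrN.
  exact: gamma_lb_coef_le.
- have t_le : t <= - ln (1 - t) by rewrite lerNr; apply: le_ln1Dx; rewrite ltrN2.
  apply: ge0_ler_powR => //; rewrite ?nnegrE ?subr_ge0 ?(ltW t0) ?(le_trans (ltW t0) t_le)//.
Qed.

Lemma gamma_integrand_ge (x a t : R) : x <= 1 -> 0 < a < 1 -> 0 < t ->
  gamma_lb_coef x a * expR (- a^-1 * t) <= t `^ (x - 1) * expR (- t).
Proof.
move=> x_le1 a01 t0; have [a0 _] := andP a01.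
rewrite -ler_pdivlMr ?expR_gt0// -mulrA -expRN -expRD.
have -> : - t + - (- a^-1 * t) = (1 - a) / a * t by field; rewrite gt_eqF.
exact: gamma_lb_coef_le.
Qed.

Lemma mulr_gamma_lb_coef (x a : R) : 0 < a < 1 ->
  a * gamma_lb_coef x a = a `^ x * expR (1 - x) * ((1 - x) / (1 - a)) `^ (x - 1).
Proof.
move=> /andP[a0 a1]; rewrite /gamma_lb_coef mulrA; congr (_ * _).
rewrite !gt0_powRE ?divr_gt0 ?expR_gt0// ln_div ?posrE ?expR_gt0// expRK.
have aE : a = expR (ln a) by rewrite lnK ?posrE.
by rewrite {1}aE -!expRD; congr expR; ring.
Qed.

Lemma integral_powR_itv_cc1 (s e : R) : 0 < s -> 0 < e -> e < 1 ->
  (\int[mu]_(t in `[e, 1%R]%classic) (t `^ (s - 1))%:E = ((1 - e `^ s) / s)%:E)%E.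
Proof.
move=> s0 e0 e1.
pose F t := s^-1 * t `^ s.
have dF t : 0 < t -> derivable F t 1.
  by move=> t0; apply: derivableM => //; apply: derivable_powR; rewrite in_itv/= andbT.
have cF t : 0 < t -> {for t, continuous F}.
  by move=> t0; apply/differentiable_continuous/derivable1_diffP/dF.
rewrite (_ : (1 - e `^ s) / s = F 1 - F e); last by rewrite /F powR1; field; rewrite gt_eqF.
apply: continuous_FTC2 => //.
- apply: derivable_within_continuous => t; rewrite in_itv/= => /andP[et _].
  by apply: derivable_powR; rewrite in_itv/= andbT (lt_le_trans e0 et).
- split; last 2 first.
  + by apply/cvg_at_right_filter; apply: cF.
  + by apply/cvg_at_left_filter; apply: cF.
  by move=> t; rewrite in_itv/= => /andP[et _]; apply: dF; exact: lt_trans et.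
- move=> t; rewrite in_itv/= => /andP[et _]; have t0 := lt_trans e0 et.
  rewrite /F derive1Ml; last by apply: derivable_powR; rewrite in_itv/= andbT.
  by rewrite powR_derive1 ?in_itv/= ?andbT// mulrA mulVf ?gt_eqF// mul1r.
Qed.

Lemma integral_powR_itv_oo01_ge (s : R) : 0 < s ->
  ((s^-1)%:E <= \int[mu]_(t in `]0%R, 1%R[) (t `^ (s - 1))%:E)%E.
Proof.
move=> s0.
have mP D : measurable_fun D (fun t : R => (t `^ (s - 1))%:E).
  by apply/measurable_EFinP; apply: measurable_funTS; exact: measurable_powR.
(* \int_e^1 t^(s-1) dt = (1 - e^s)/s is within d of 1/s as soon as e^s <= d s *)
apply/lee_subgt0Pr => d d0.
pose e := Num.min 2^-1 ((d * s) `^ s^-1).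
have ds0 : 0 < d * s by rewrite mulr_gt0.
have e0 : 0 < e by rewrite lt_min invr_gt0 ltr0n powR_gt0.
have e1 : e < 1 by rewrite gt_min invf_lt1// ltr1n.
have es : e `^ s <= d * s.
  apply: (@le_trans _ _ (((d * s) `^ s^-1) `^ s)).
    apply: ge0_ler_powR; rewrite ?nnegrE ?powR_ge0 ?(ltW e0) ?(ltW s0)//.
    by rewrite ge_min lexx orbT.
  by rewrite -powRrM mulVf ?gt_eqF// powRr1 // ltW.
apply: (@le_trans _ _ (\int[mu]_(t in `[e, 1%R]%classic) (t `^ (s - 1))%:E)%E).
  rewrite integral_powR_itv_cc1// -EFinB lee_fin.
  by rewrite mulrBl mul1r lerB// ler_pdivrMr// mulrC.
rewrite -(@integral_itv_obnd_cbnd _ e (BRight 1%R))//.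
rewrite -(@integral_itv_bndo_bndc _ (BRight e) 1%R)//.
apply: ge0_subset_integral => //.
- exact: mP.
- by move=> t _; rewrite lee_fin powR_ge0.
- by move=> t /=; rewrite !in_itv/= => /andP[et t1]; rewrite t1 (lt_trans e0 et).
Qed.

Lemma integral_expR_itv_oy (r : R) : 0 < r ->
  (\int[mu]_(t in `]0%R, +oo[) (r * expR (- r * t))%:E = 1)%E.
Proof.
move=> r0.
have cexpNM : continuous (fun z : R^o => expR (- r * z)).
  move=> z; apply: continuous_comp; last exact: continuous_expR.
  by apply: continuousM => //; apply: (@continuousN _ R^o); exact: cst_continuous.
transitivity (\int[mu]_(t in `]0%R, +oo[) (exponential_pdf r t)%:E)%E.
  apply: eq_integral => t; rewrite inE/= in_itv/= andbT => t0.
  by rewrite exponential_pdfE// ltW.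
rewrite integral_itv_obnd_cbnd; last first.
  by apply/measurable_EFinP; apply: measurable_funTS; exact: measurable_exponential_pdf.
rewrite (@ge0_continuous_FTC2y _ _ (fun x => - expR (- r * x)) _ 0)//.
- by rewrite mulr0 expR0 EFinN oppeK add0e.
- by move=> x _; apply: exponential_pdf_ge0; exact: ltW.
- exact: within_continuous_exponential_pdf.
- rewrite -oppr0; apply: cvgN.
  rewrite (_ : (fun x => expR (- r * x)) = (fun z => expR (- z)) \o (fun z => r * z)).
    apply: (@cvg_comp _ _ _ _ _ _ (pinfty_nbhs R)); last exact: cvgr_expR.
    exact: gt0_cvgMry.
  by apply: eq_fun => x; rewrite mulNr.
- by apply: cvgN; apply/cvg_at_right_filter; exact: cexpNM.
- exact: derive1_exponential_pdf.
Qed.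

Lemma measurable_bigamma_integrand (x y : R) (D : set R) :
  measurable_fun D (fun t => ((- ln t) `^ (x - 1) * (- ln (1 - t)) `^ (y - 1))%:E).
Proof.
apply/measurable_EFinP; apply: measurable_funTS; apply: measurable_funM.
- apply: (measurableT_comp (measurable_powR _)).
  by apply: measurableT_comp => //; exact: measurable_ln.
- apply: (measurableT_comp (measurable_powR _)).
  apply: measurableT_comp => //; apply: measurableT_comp; first exact: measurable_ln.
  exact: measurable_funB.
Qed.

Lemma Bigamma_ge (x y a : R) : x <= 1 -> 1 <= y -> 0 < a < 1 ->
  ((a / (1 + a * (y - 1)) * gamma_lb_coef x a)%:E <= Bigamma x y)%E.
Proof.
move=> x_le1 y_ge1 a01; have [a0 a1] := andP a01.
pose s := (1 - a) / a + y.
have c0 : 0 < (1 - a) / a by rewrite divr_gt0 ?subr_gt0.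
have s0 : 0 < s by rewrite /s; lra.
have -> : a / (1 + a * (y - 1)) = s^-1.
  by rewrite -invf_div /s; congr GRing.inv; field; rewrite gt_eqF.
rewrite mulrC EFinM /Bigamma.
apply: (@le_trans _ _ (\int[mu]_(t in `]0%R, 1%R[) (gamma_lb_coef x a * t `^ (s - 1))%:E)%E).
  under eq_integral do rewrite EFinM.
  rewrite ge0_integralZl_EFin ?gamma_lb_coef_ge0//.
  - by apply: lee_wpmul2l; rewrite ?lee_fin ?gamma_lb_coef_ge0 ?integral_powR_itv_oo01_ge.
  - by move=> t _; rewrite lee_fin powR_ge0.
  - by apply/measurable_EFinP; apply: measurable_funTS; exact: measurable_powR.
apply: ge0_le_integral => //.
- by move=> t _; rewrite lee_fin mulr_ge0 ?gamma_lb_coef_ge0 ?powR_ge0.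
- by apply/measurable_EFinP; apply: measurable_funTS; apply: measurable_funM.
- exact: measurable_bigamma_integrand.
- move=> t; rewrite /= in_itv/= => t01.
  have -> : s - 1 = (1 - a) / a + (y - 1) by rewrite /s; ring.
  by rewrite lee_fin bigamma_integrand_ge.
Qed.

Lemma EulerGamma_ge (x a : R) : x <= 1 -> 0 < a < 1 ->
  ((a * gamma_lb_coef x a)%:E <= EulerGamma x)%E.
Proof.
move=> x_le1 a01; have [a0 _] := andP a01.
have aK0 : 0 <= a * gamma_lb_coef x a by rewrite mulr_ge0 ?gamma_lb_coef_ge0 ?ltW.
have ia0 : 0 < a^-1 by rewrite invr_gt0.
have mexp (f : R -> R) D : measurable_fun setT f -> measurable_fun D (expR \o f).
  by move=> mf; apply: measurable_funTS; apply: measurableT_comp => //; exact: measurable_expR.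
rewrite /EulerGamma; apply: (@le_trans _ _
  (\int[mu]_(t in `]0%R, +oo[) (a * gamma_lb_coef x a * (a^-1 * expR (- a^-1 * t)))%:E)%E).
  under eq_integral do rewrite EFinM.
  rewrite ge0_integralZl_EFin ?integral_expR_itv_oy ?mule1//.
  - by move=> t _; rewrite lee_fin mulr_ge0 ?expR_ge0 ?ltW.
  - by apply/measurable_EFinP; apply: measurable_funM => //; apply: mexp.
apply: ge0_le_integral => //.
- by move=> t _; rewrite lee_fin mulr_ge0 // mulr_ge0 ?expR_ge0 // ltW.
- apply/measurable_EFinP; apply: measurable_funM => //; apply: measurable_funM => //.
  exact: mexp.
- apply/measurable_EFinP; apply: measurable_funM; last exact: mexp.
  by apply: measurable_funTS; exact: measurable_powR.
- move=> t; rewrite /= in_itv/= andbT => t0.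
  by rewrite lee_fin mulrACA mulfV ?gt_eqF// mul1r gamma_integrand_ge.
Qed.
End GammaLowerBound.

Theorem mainTheorem5 (R : realType) :
  (forall x y a : R, 0 < x <= 1 -> 1 <= y -> 0 < a < 1 ->
     (((a / (1 + a * (y - 1))) * (a / expR 1) `^ (x - 1)
        * ((1 - x) / (1 - a)) `^ (x - 1))%:E <= Bigamma x y)%E)
  /\
  (forall x a : R, 0 < x <= 1 -> 0 < a < 1 ->
     ((a `^ x * expR (1 - x) * ((1 - x) / (1 - a)) `^ (x - 1))%:E
       <= EulerGamma x)%E).
Proof.
split.
- by move=> x y a /andP[_ x_le1] y_ge1 a01; rewrite -mulrA Bigamma_ge.
- by move=> x a /andP[_ x_le1] a01; rewrite -mulr_gamma_lb_coef// EulerGamma_ge.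
Qed.
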